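(* Let $m>0$ and let $f:\mathbb R^d\to\mathbb R$ be continuously differentiable and $m$-strongly convex with minimizer $x^\star$ (no Lipschitz assumption on $\nabla f$ is required). Let $\bar b>0$ and let $x(t)$, $t\ge0$, solve $\ddot x+\bar b\sqrt m\,\dot x+\nabla f(x)=0$. Set $$\bar\Xi(\bar r,\bar b)=\bar r\bar b^2-2(\bar r^2+1)\bar b+\bar r^3+3\bar r.$$ Then there is a unique real $\bar r$ with $\bar\Xi(\bar r,\bar b)=0$; it satisfies $0<\bar r\le1$, with $\bar r=1$ if and only if $\bar b=2$. Let $\lambda=\sqrt m\,\bar r$ and $v=\dot x/\sqrt m$. Then the function $$t\mapsto e^{\lambda t}\Big(f(x(t))-f(x^\star)+\tfrac m2\big\|v(t)+\bar r(x(t)-x^\star)\big\|^2\Big)$$ is nonincreasing on $[0,\infty)$; consequently $f(x(t))-f(x^\star)\le\bar Ce^{-\lambda t}$ with $$\bar C=f(x(0))-f(x^\star)+\frac m2\Big\|\frac1{\sqrt m}\dot x(0)+\bar r(x(0)-x^\star)\Big\|^2.$$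
   Context: $f$ is $m$-strongly convex if $f(y)\ge f(x)+\nabla f(x)^T(y-x)+\frac m2\|y-x\|^2$ for all $x,y$. The quadratic term equals $(\xi-\xi^\star)^T(\widehat{\bar P}\otimes I_d)(\xi-\xi^\star)$ with $\xi=(v,x)$, $\xi^\star=(0,x^\star)$, $\widehat{\bar P}=\frac m2\begin{pmatrix}1&\bar r\\ \bar r&\bar r^2\end{pmatrix}$. *)

From HB Require Import structures.
From mathcomp Require Import all_boot all_order all_algebra.
From mathcomp Require Import all_classical all_reals all_analysis.
Set Implicit Arguments. Unset Strict Implicit. Unset Printing Implicit Defensive.
Import Order.TTheory GRing.Theory Num.Theory.
Import numFieldNormedType.Exports.
Local Open Scope classical_set_scope.
Local Open Scope ring_scope.

Definition dotv {R : realType} {d : nat} (u v : 'rV[R]_d) : R :=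
  \sum_(i < d) u ord0 i * v ord0 i.
Definition sqnorm {R : realType} {d : nat} (u : 'rV[R]_d) : R := dotv u u.

Definition C1_with_gradient {R : realType} {d : nat}
    (f : 'rV[R]_d -> R) (gradf : 'rV[R]_d -> 'rV[R]_d) : Prop :=
  (forall x, differentiable f x) /\
  (forall x h, 'd f x h = dotv (gradf x) h) /\
  continuous gradf.

Definition strongly_convex {R : realType} {d : nat} (m : R)
    (f : 'rV[R]_d -> R) (gradf : 'rV[R]_d -> 'rV[R]_d) : Prop :=
  forall x y, f x + dotv (gradf x) (y - x) + m / 2 * sqnorm (y - x) <= f y.

Definition Xibar {R : realType} (r b : R) : R :=
  r * b ^+ 2 - 2 * (r ^+ 2 + 1) * b + r ^+ 3 + 3 * r.

Definition solves_ode {R : realType} {d : nat} (m b : R)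
    (gradf : 'rV[R]_d -> 'rV[R]_d) (x xd : R -> 'rV[R]_d) : Prop :=
  {within `[0, +oo[, continuous x} /\ {within `[0, +oo[, continuous xd} /\
  forall t : R, 0 < t ->
    derivable x t 1 /\ 'D_1 x t = xd t /\ derivable xd t 1 /\
    'D_1 xd t + (b * Num.sqrt m) *: xd t + gradf (x t) = 0.

From HB Require Import structures.
From mathcomp Require Import all_boot all_order all_algebra.
From mathcomp Require Import all_classical all_reals all_analysis.
From mathcomp Require Import ring lra.
Import Order.TTheory GRing.Theory Num.Theory.
Import numFieldNormedType.Exports.
Local Open Scope classical_set_scope.
Local Open Scope ring_scope.

(* 1. The cubic r |-> Xibar r b (b > 0) has exactly one real root, which lies
      in (0, 1] and equals 1 iff b = 2 (intermediate value theorem for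
      existence; a factorisation of Xibar r1 b - Xibar r2 b for uniqueness).
   2. Dissipation: at a root r, the quadratic form
        q(v, e) = -r/2 e^2 + r/2 (v + r e)^2 + (r - b)(v + r e) v
      is a negative multiple of a perfect square, hence q <= 0.  Summing it
      over coordinates gives a vector inequality with v = x'/sqrt m, e = x - xs.
   3. Calculus on R -> 'rV[R]_d: derivatives of coordinates, of sqnorm and of
      f along a curve.
   4. For W = x'/sqrt m + r (x - xs), V = f x - f xs + m/2 |W|^2 and
      E t = exp(lam t) V t with lam = sqrt m r, strong convexity bounds
      lam V + V' by the quantity of step 2, so E' <= 0; with continuity of E on
      [0, +oo) this makes E nonincreasing, and f x - f xs <= V gives the bound. *)

(* Any root of Xibar (., b) with b > 0 lies in (0, 1]: the root equation
   reads r (b - r)^2 = 2b - 3r, which forces r > 0, and multiplied by r it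
   reads (r b - r^2 - 1)^2 = 1 - r^2, which forces r^2 <= 1. *)
Lemma Xibar_root_bounds {R : realType} {r b : R} :
  0 < b -> Xibar r b = 0 -> 0 < r /\ r <= 1.
Proof.
rewrite /Xibar => b_gt0 Xi0.
have r_gt0 : 0 < r.
  have sq : r * (b - r) ^+ 2 = 2 * b - 3 * r.
    by apply/eqP; rewrite -subr_eq0 -Xi0; apply/eqP; ring.
  rewrite ltNge; apply/negP => r_le0.
  have : r * (b - r) ^+ 2 <= 0 by rewrite mulr_le0_ge0 // sqr_ge0.
  lra.
split=> //.
have sq : (r * b - (r ^+ 2 + 1)) ^+ 2 = 1 - r ^+ 2.
  by apply/eqP; rewrite -subr_eq0 -(mulr0 r) -Xi0; apply/eqP; ring.
have : r ^+ 2 <= 1 by have := sqr_ge0 (r * b - (r ^+ 2 + 1)); lra.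
nra.
Qed.

(* Xibar r1 b - Xibar r2 b = (r1 - r2) ((b - r1 - r2)^2 - r1 r2 + 3), and the
   cofactor is positive for roots since r1 r2 <= 1: the root is unique. *)
Lemma Xibar_root_unique {R : realType} {r1 r2 b : R} :
  0 < b -> Xibar r1 b = 0 -> Xibar r2 b = 0 -> r1 = r2.
Proof.
move=> b_gt0 Xi1 Xi2.
have [r1_gt0 r1_le1] := Xibar_root_bounds b_gt0 Xi1.
have [r2_gt0 r2_le1] := Xibar_root_bounds b_gt0 Xi2.
have factor : (r1 - r2) * ((b - (r1 + r2)) ^+ 2 - r1 * r2 + 3) = 0.
  by rewrite -[RHS](subrr 0) -{1}Xi1 -Xi2 /Xibar; ring.
have cofactor_gt0 : 0 < (b - (r1 + r2)) ^+ 2 - r1 * r2 + 3.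
  by have := sqr_ge0 (b - (r1 + r2)); nra.
by apply/eqP; move/eqP: factor; rewrite mulf_eq0 (gt_eqF cofactor_gt0) orbF subr_eq0.
Qed.

(* Xibar (., b) is a polynomial with Xibar 0 b = -2b < 0 <= (b - 2)^2 = Xibar 1 b,
   so it has a root in [0, 1] by the intermediate value theorem. *)
Lemma Xibar_root_exists {R : realType} {b : R} : 0 < b -> exists r, Xibar r b = 0.
Proof.
move=> b_gt0.
pose p : {poly R} := 'X^3 - (2 * b)%:P * 'X^2 + (b ^+ 2 + 3)%:P * 'X - (2 * b)%:P.
have pE r : p.[r] = Xibar r b.
  by rewrite /p !(hornerD, hornerN, hornerCM, hornerXn, hornerX, hornerC) /Xibar; ring.
have p0_le0 : p.[0] <= 0 by rewrite pE /Xibar; lra.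
have p1_ge0 : 0 <= p.[1] by rewrite pE /Xibar; have := sqr_ge0 (b - 2); nra.
have [|c _ pc0] := @IVT R (horner p) 0 1 0 ler01
    (continuous_subspaceT (@continuous_horner R p)).
  by rewrite ge_min p0_le0 le_max p1_ge0 orbT.
by exists c; rewrite -pE.
Qed.

(* The critical damping b = 2 is exactly the case r = 1, since
   Xibar 1 b = (b - 2)^2. *)
Lemma Xibar_root_eq1 {R : realType} {r b : R} :
  0 < b -> Xibar r b = 0 -> (r = 1 <-> b = 2).
Proof.
move=> b_gt0 Xi0; split=> [r1|b2].
  have : (b - 2) ^+ 2 = 0 by rewrite -Xi0 r1 /Xibar; ring.
  by move/eqP; rewrite sqrf_eq0 subr_eq0 => /eqP.
by apply: (Xibar_root_unique b_gt0 Xi0); rewrite b2 /Xibar; ring.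
Qed.

(* The scalar dissipation inequality: with a = 3r/2 - b < 0,
   4 a q(v, e) = (2 a v + r (2r - b) e)^2 - r Xibar(r, b) e^2,
   so q(v, e) <= 0 at a root r. *)
Lemma dissipation_quadratic_le0 {R : realType} {r b : R} (v e : R) :
  0 < b -> Xibar r b = 0 ->
  - r / 2 * e ^+ 2 + r / 2 * (v + r * e) ^+ 2 + (r - b) * (v + r * e) * v <= 0.
Proof.
move=> b_gt0 Xi0; have [r_gt0 _] := Xibar_root_bounds b_gt0 Xi0.
have sq : r * (b - r) ^+ 2 = 2 * b - 3 * r.
  by apply/eqP; rewrite -subr_eq0 -Xi0; apply/eqP; rewrite /Xibar; ring.
set a := 3 * r / 2 - b.
have a_lt0 : a < 0.
  have [b_eq_r|b_neq_r] := eqVneq b r.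
    by move: sq; rewrite b_eq_r subrr expr0n mulr0 /a; lra.
  have : 0 < r * (b - r) ^+ 2 by rewrite mulr_gt0 // exprn_even_gt0 // subr_eq0.
  rewrite /a; lra.
have square : 4 * a * (- r / 2 * e ^+ 2 + r / 2 * (v + r * e) ^+ 2 + (r - b) * (v + r * e) * v)
    = (2 * a * v + r * (2 * r - b) * e) ^+ 2 - r * Xibar r b * e ^+ 2.
  by rewrite /a /Xibar; field.
rewrite Xi0 mulr0 mul0r subr0 in square.
have := sqr_ge0 (2 * a * v + r * (2 * r - b) * e).
by rewrite -square nmulr_rge0 // pmulr_rlt0.
Qed.

(* Vector form of the dissipation inequality, with s = sqrt m, g = grad f(x),
   e = x - xs, y = x': coordinatewise it is s^3 q(y_i / s, e_i) <= 0.  The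
   second argument of the last dotv is the derivative of y / s + r e when
   y' = - b s y - g. *)
Lemma dissipation_le0 {R : realType} {d : nat} {s r b : R} (g e y : 'rV[R]_d) :
  0 < s -> 0 < b -> Xibar r b = 0 ->
  s * r * (dotv g e - s ^+ 2 / 2 * sqnorm e + s ^+ 2 / 2 * sqnorm (s^-1 *: y + r *: e))
  + dotv g y + s ^+ 2 * dotv (s^-1 *: y + r *: e) (s^-1 *: (- (b * s) *: y - g) + r *: y)
  <= 0.
Proof.
move=> s_gt0 b_gt0 Xi0.
rewrite /sqnorm /dotv !mulr_sumr -sumrB -big_split /= mulr_sumr -!big_split /=.
apply: sumr_le0 => i _; rewrite !mxE.
set gi := g ord0 i; set ei := e ord0 i; set yi := y ord0 i.
have -> : s * r * (gi * ei - s ^+ 2 / 2 * (ei * ei) +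
    s ^+ 2 / 2 * ((s^-1 * yi + r * ei) * (s^-1 * yi + r * ei))) + gi * yi +
    s ^+ 2 * ((s^-1 * yi + r * ei) * (s^-1 * (- (b * s) * yi - gi) + r * yi))
  = s ^+ 3 * (- r / 2 * ei ^+ 2 + r / 2 * (s^-1 * yi + r * ei) ^+ 2
              + (r - b) * (s^-1 * yi + r * ei) * (s^-1 * yi)).
  by field; rewrite gt_eqF.
apply: mulr_ge0_le0; first by rewrite exprn_ge0 // ltW.
exact: dissipation_quadratic_le0 (s^-1 * yi) ei b_gt0 Xi0.
Qed.

Lemma is_derive_coord {R : realType} {d : nat} {F : R -> 'rV[R]_d} {t : R}
    {dF : 'rV[R]_d} (i : 'I_d) :
  is_derive t 1 F dF -> is_derive t 1 (fun s => F s ord0 i) (dF ord0 i).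
Proof.
move=> hF; have dF_t : derivable F t 1 by exact: ex_derive.
have <- : 'D_1 F t = dF by exact: derive_val.
rewrite derive_mx // mxE.
exact/derivableP/(derivable_mxP _ _ _).1.
Qed.

Lemma is_derive_sqnorm {R : realType} {d : nat} {F : R -> 'rV[R]_d} {t : R}
    {dF : 'rV[R]_d} :
  is_derive t 1 F dF -> is_derive t 1 (fun s => sqnorm (F s)) (2 * dotv (F t) dF).
Proof.
move=> hF.
have -> : (fun s => sqnorm (F s)) =
    \sum_(i < d) ((fun s => F s ord0 i) * (fun s => F s ord0 i)).
  by rewrite fct_sumE.
rewrite /dotv mulr_sumr.
have -> : \sum_(i < d) 2 * (F t ord0 i * dF ord0 i) =
    \sum_(i < d) (F t ord0 i *: dF ord0 i + F t ord0 i *: dF ord0 i).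
  by apply: eq_bigr => i _; rewrite mulr2n mulrDl !mul1r.
apply: is_derive_sum => i.
exact: is_deriveM (is_derive_coord i hF) (is_derive_coord i hF).
Qed.

Lemma is_derive_comp_gradient {R : realType} {d : nat} {f : 'rV[R]_d -> R}
    {gradf : 'rV[R]_d -> 'rV[R]_d} {F : R -> 'rV[R]_d} {t : R} {dF : 'rV[R]_d} :
  C1_with_gradient f gradf -> is_derive t 1 F dF ->
  is_derive t 1 (fun s => f (F s)) (dotv (gradf (F t)) dF).
Proof.
move=> [f_diff [df_grad _]] hF.
have F_diff : differentiable F t by exact/derivable1_diffP/ex_derive.
have fF_diff : differentiable (f \o F) t by exact: differentiable_comp.
apply: DeriveDef; first exact/derivable1_diffP.
by rewrite deriveE // diff_comp //= df_grad -deriveE // derive_val.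
Qed.

Lemma sqnorm_ge0 {R : realType} {d : nat} (u : 'rV[R]_d) : 0 <= sqnorm u.
Proof. by apply: sumr_ge0 => i _; rewrite -expr2 sqr_ge0. Qed.

Lemma continuous_sqnorm {R : realType} {d : nat} : continuous (@sqnorm R d).
Proof.
have -> : @sqnorm R d = \sum_(i < d) (fun u : 'rV[R]_d => u ord0 i * u ord0 i).
  by rewrite fct_sumE.
elim/big_ind: _ => [|f g f_cont g_cont|i _].
- exact: cst_continuous.
- exact: (fun u => continuousD (f_cont u) (g_cont u)).
- by move=> u; apply: continuousM; exact: coord_continuous.
Qed.

Lemma strong_convexity_gap {R : realType} {d : nat} {m : R} {f : 'rV[R]_d -> R}
    {gradf : 'rV[R]_d -> 'rV[R]_d} (y z : 'rV[R]_d) :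
  strongly_convex m f gradf ->
  f y - f z <= dotv (gradf y) (y - z) - m / 2 * sqnorm (y - z).
Proof.
move=> /(_ y z).
have -> : dotv (gradf y) (z - y) = - dotv (gradf y) (y - z).
  by rewrite /dotv -sumrN; apply: eq_bigr => i _; rewrite !mxE; ring.
have -> : sqnorm (z - y) = sqnorm (y - z).
  by rewrite /sqnorm /dotv; apply: eq_bigr => i _; rewrite !mxE; ring.
lra.
Qed.

Section LyapunovDecay.
Variables (R : realType) (d : nat) (m b r : R) (f : 'rV[R]_d -> R)
  (gradf : 'rV[R]_d -> 'rV[R]_d) (xs : 'rV[R]_d) (x xd : R -> 'rV[R]_d).
Hypotheses (m_gt0 : 0 < m) (f_C1 : C1_with_gradient f gradf)
  (f_strong : strongly_convex m f gradf) (b_gt0 : 0 < b) (r_root : Xibar r b = 0)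
  (x_ode : solves_ode m b gradf x xd).

Let s := Num.sqrt m.
Let lam := s * r.
Let W (t : R) := s^-1 *: xd t + r *: (x t - xs).
Let V (t : R) := f (x t) - f xs + m / 2 * sqnorm (W t).
Let E (t : R) := expR (lam * t) * V t.

(* Main computation: for t > 0, E'(t) = exp(lam t) (lam V t + V'(t)) with
   lam V + V' <= 0 by strong convexity and the dissipation inequality. *)
Lemma E_derivative_le0 (t : R) : 0 < t -> derivable E t 1 /\ 'D_1 E t <= 0.
Proof.
move=> t_gt0; have [dx [Dx [dxd ode_t]]] := x_ode.2.2 t t_gt0.
have s_gt0 : 0 < s by rewrite sqrtr_gt0.
have m_sq : m = s ^+ 2 by rewrite sqr_sqrtr // ltW.
have acc : 'D_1 xd t = - (b * s) *: xd t - gradf (x t).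
  by apply/eqP; rewrite scaleNr -opprD -addr_eq0 addrA; apply/eqP.
have hx : is_derive t 1 x (xd t) by rewrite -Dx; exact: derivableP dx.
have hxd : is_derive t 1 xd (- (b * s) *: xd t - gradf (x t)).
  by rewrite -acc; exact: derivableP dxd.
pose dW := s^-1 *: (- (b * s) *: xd t - gradf (x t)) + r *: xd t.
have hW : is_derive t 1 W dW.
  have := is_deriveD (is_deriveZ s^-1 hxd) (is_deriveZ r (is_deriveB hx (is_derive_cst xs t 1))).
  by rewrite subr0.
pose dV := dotv (gradf (x t)) (xd t) + m / 2 * (2 * dotv (W t) dW).
have hV : is_derive t 1 V dV.
  have := is_deriveD (is_deriveB (is_derive_comp_gradient f_C1 hx) (is_derive_cst (f xs) t 1))
    (is_deriveZ (m / 2) (is_derive_sqnorm hW)).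
  by rewrite subr0.
have hE : is_derive t 1 E (expR (lam * t) * dV + V t * (expR (lam * t) * lam)).
  have hlam : is_derive t 1 (fun u => lam * u) lam.
    by have := is_deriveZ lam (is_derive_id t 1); rewrite /GRing.scale /= mulr1.
  exact: is_deriveM (is_derive1_comp _ hlam) hV.
split; first exact: ex_derive.
rewrite derive_val (mulrCA (V t)) (mulrC (V t)) -mulrDr addrC.
rewrite mulr_ge0_le0 ?expR_ge0 //.
have bound : lam * (dotv (gradf (x t)) (x t - xs) - m / 2 * sqnorm (x t - xs)
    + m / 2 * sqnorm (W t)) + dV <= 0.
  suff -> : dV = dotv (gradf (x t)) (xd t) + s ^+ 2 * dotv (W t) dW.
    by rewrite m_sq addrA; exact: dissipation_le0 _ _ _ s_gt0 b_gt0 r_root.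
  by rewrite /dV mulrA divfK ?pnatr_eq0 // m_sq.
apply: le_trans bound; apply: lerD => //.
rewrite ler_pM2l; last by rewrite mulr_gt0 // (Xibar_root_bounds b_gt0 r_root).1.
apply: lerD => //; exact: strong_convexity_gap (x t) xs f_strong.
Qed.

Lemma E_continuous : {within `[0, +oo[, continuous E}.
Proof.
have [x_cont [xd_cont _]] := x_ode.
have f_cont : continuous f.
  by move=> z; apply: differentiable_continuous; exact: f_C1.1.
have exp_cont : continuous (fun u : R => expR (lam * u)).
  move=> u; apply: continuous_comp; last exact: continuous_expR.
  by apply: continuousM; [exact: cvg_cst | exact: cvg_id].
move=> u.
have W_cont : {for u, continuous (W : subspace `[0, +oo[ -> 'rV[R]_d)}.
  apply: continuousD; apply: continuousZ; try exact: cvg_cst.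
    exact: xd_cont.
  by apply: continuousB; [exact: x_cont | exact: cvg_cst].
have V_cont : {for u, continuous (V : subspace `[0, +oo[ -> R)}.
  exact: continuousD (continuousB (continuous_comp (x_cont u) (f_cont _)) (cvg_cst _))
    (continuousM (cvg_cst _) (continuous_comp W_cont (continuous_sqnorm _))).
apply: (continuousM _ V_cont); exact: continuous_subspaceT.
Qed.

Lemma E_nonincreasing : forall u v : R, 0 <= u -> u <= v -> E v <= E u.
Proof.
apply: ler0_derive1_nincry; last exact: E_continuous.
- by move=> t; rewrite in_itv /= andbT => /E_derivative_le0 [].
- by move=> t; rewrite in_itv /= andbT => /E_derivative_le0 [_]; rewrite derive1E.
Qed.

(* f x - f xs <= V t = exp(-lam t) E t <= exp(-lam t) E 0 = exp(-lam t) V 0. *)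
Lemma suboptimality_decay (t : R) : 0 <= t -> f (x t) - f xs <= V 0 * expR (- lam * t).
Proof.
move=> t_ge0.
have V_E : V t = E t * expR (- lam * t).
  by rewrite /E mulNr expRN mulrAC divff ?mul1r // gt_eqF // expR_gt0.
have E0 : E 0 = V 0 by rewrite /E mulr0 expR0 mul1r.
apply: (@le_trans _ _ (V t)); first by rewrite lerDl mulr_ge0 ?sqnorm_ge0 // divr_ge0 // ltW.
by rewrite V_E -E0 ler_wpM2r ?expR_ge0 // E_nonincreasing.
Qed.
End LyapunovDecay.

Arguments E_nonincreasing {R d m b r f gradf xs x xd}.
Arguments suboptimality_decay {R d m b r f gradf xs x xd}.

Theorem theorem5 (R : realType) (d : nat) (m b : R)
    (f : 'rV[R]_d -> R) (gradf : 'rV[R]_d -> 'rV[R]_d) (xs : 'rV[R]_d)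
    (x xd : R -> 'rV[R]_d) :
  0 < m -> C1_with_gradient f gradf -> strongly_convex m f gradf ->
  (forall y, f xs <= f y) ->
  0 < b -> solves_ode m b gradf x xd ->
  (exists! r : R, Xibar r b = 0) /\
  forall r : R, Xibar r b = 0 ->
    let lam := Num.sqrt m * r in
    let v := fun t => (Num.sqrt m)^-1 *: xd t in
    let E := fun t => expR (lam * t) *
        (f (x t) - f xs + m / 2 * sqnorm (v t + r *: (x t - xs))) in
    let Cb := f (x 0) - f xs +
        m / 2 * sqnorm ((Num.sqrt m)^-1 *: xd 0 + r *: (x 0 - xs)) in
    [/\ 0 < r /\ r <= 1, (r = 1 <-> b = 2),
        (forall s t : R, 0 <= s -> s <= t -> E t <= E s) &
        (forall t : R, 0 <= t -> f (x t) - f xs <= Cb * expR (- lam * t))].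
Proof.
move=> m_gt0 f_C1 f_strong _ b_gt0 x_ode; split.
  have [r r_root] := Xibar_root_exists b_gt0.
  by exists r; split=> // r' /(Xibar_root_unique b_gt0 r_root).
move=> r r_root lam v E Cb; split.
- exact: Xibar_root_bounds b_gt0 r_root.
- exact: Xibar_root_eq1 b_gt0 r_root.
- exact: E_nonincreasing m_gt0 f_C1 f_strong b_gt0 r_root x_ode.
- exact: suboptimality_decay m_gt0 f_C1 f_strong b_gt0 r_root x_ode.
Qed.
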